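(* Let $f:\mathbb{R}^d\to\mathbb{R}$ be $\beta$-smooth with minimum value $f^\star$, and run AdaSGD (as defined in the context) with parameters $\eta,\gamma>0$ using a stochastic gradient oracle with bounded affine noise with parameters $\sigma_0,\sigma_1\ge0$. Then for all $t\ge1$, $$\sum_{s=1}^t|\tilde\eta_s-\eta_s|\,(\nabla f(w_s)\cdot g_s)\le\frac{\bar\Delta_t}4+\frac12\sum_{s=1}^t\tilde\eta_s\|\nabla f(w_s)\|^2+2\eta\sigma_0\sum_{s=1}^t\frac{\|g_s\|^2}{G_s^2}+8\eta^2\beta\sigma_1^2\Big(\sum_{s=1}^t\frac{\|g_s\|^2}{G_s^2}\Big)^2.$$
   Context: $\|\cdot\|$ is the Euclidean norm. $\beta$-smooth: $\|\nabla f(x)-\nabla f(y)\|\le\beta\|x-y\|$. Oracle: queried at $w$, returns random $g(w)$ with $\mathbb{E}[g(w)\mid w]=\nabla f(w)$ and, with probability one, $\|g(w)-\nabla f(w)\|^2\le\sigma_0^2+\sigma_1^2\|\nabla f(w)\|^2$. AdaSGD: arbitrary $w_1$; for each $t$, $g_t=g(w_t)$, $G_t=\sqrt{\gamma^2+\sum_{s=1}^t\|g_s\|^2}$ (so $G_0=\gamma$), $\eta_t=\eta/G_t$, $w_{t+1}=w_t-\eta_tg_t$. Decorrelated step sizes: $\tilde\eta_t=\eta/\sqrt{G_{t-1}^2+(1+\sigma_1^2)\|\nabla f(w_t)\|^2+\sigma_0^2}$. $\bar\Delta_t=\max_{s\le t}f(w_s)-f^\star$. *)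

From HB Require Import structures.
From mathcomp Require Import all_boot all_order all_algebra.
From mathcomp Require Import all_classical all_reals all_analysis.
Set Implicit Arguments. Unset Strict Implicit. Unset Printing Implicit Defensive.
Import Order.TTheory GRing.Theory Num.Theory.
Import numFieldNormedType.Exports.
Local Open Scope ring_scope.

Definition dotv {R : realType} {d : nat} (u v : 'rV[R]_d) : R :=
  \sum_(i < d) u ord0 i * v ord0 i.
Definition sqnorm {R : realType} {d : nat} (v : 'rV[R]_d) : R := dotv v v.
Definition enorm {R : realType} {d : nat} (v : 'rV[R]_d) : R := Num.sqrt (sqnorm v).

Definition is_gradient {R : realType} {d : nat}
  (f : 'rV[R]_d -> R) (gradf : 'rV[R]_d -> 'rV[R]_d) : Prop :=
  forall w, differentiable f w /\ forall v, ('d f w : 'rV[R]_d -> R) v = dotv (gradf w) v.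

Definition smooth {R : realType} {d : nat} (beta : R) (gradf : 'rV[R]_d -> 'rV[R]_d) : Prop :=
  forall x y, enorm (gradf x - gradf y) <= beta * enorm (x - y).

Definition Gacc {R : realType} {d : nat} (gamma : R) (g : nat -> 'rV[R]_d) (t : nat) : R :=
  Num.sqrt (gamma ^+ 2 + \sum_(1 <= s < t.+1) sqnorm (g s)).

Definition eta_ada {R : realType} {d : nat} (eta gamma : R) (g : nat -> 'rV[R]_d) (t : nat) : R :=
  eta / Gacc gamma g t.

Definition eta_dec {R : realType} {d : nat} (eta gamma sigma0 sigma1 : R)
  (gradf : 'rV[R]_d -> 'rV[R]_d) (w g : nat -> 'rV[R]_d) (t : nat) : R :=
  eta / Num.sqrt (Gacc gamma g t.-1 ^+ 2 + (1 + sigma1 ^+ 2) * sqnorm (gradf (w t))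
                  + sigma0 ^+ 2).

Definition Delta_bar {R : realType} {d : nat} (f : 'rV[R]_d -> R) (fstar : R)
  (w : nat -> 'rV[R]_d) (t : nat) : R :=
  \big[Num.max/f (w 1%N)]_(1 <= s < t.+1) f (w s) - fstar.

From HB Require Import structures.
From mathcomp Require Import all_boot all_order all_algebra.
From mathcomp Require Import all_classical all_reals all_analysis.
From mathcomp Require Import ring lra.
Import Order.TTheory GRing.Theory Num.Theory.
Import numFieldNormedType.Exports.
Local Open Scope ring_scope.

(* Write T_s for the decorrelated normaliser and G_s = sqrt (G_(s-1)^2 + |g_s|^2).
   As x |-> sqrt (c + x^2) is 1-Lipschitz, |T_s - G_s| is at most the distance
   between |g_s| and sqrt ((1 + sigma1^2) |grad f(w_s)|^2 + sigma0^2), whose square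
   the affine noise bound controls by 2 (sigma0^2 + sigma1^2 |grad f(w_s)|^2).
   An AM-GM split of |eta/T_s - eta/G_s| <grad f(w_s), g_s> then leaves
   eta/T_s |grad f(w_s)|^2 / 4 plus 2 eta (sigma0 + sigma1 |grad f(w_s)|) |g_s|^2/G_s^2.
   Summing, only the sigma1 term is not yet of the required shape: smoothness gives
   |grad f(w_s)|^2 <= 2 beta (f(w_s) - fstar) <= 2 beta Delta_t, and with
   S_t = sum_s |g_s|^2 / G_s^2 a last AM-GM splits 2 eta sigma1 sqrt (2 beta Delta_t) S_t
   into Delta_t/4 + 8 eta^2 beta sigma1^2 S_t^2. *)

Section EuclideanRowVectors.
Context {R : realType} {d : nat}.
Implicit Types (u v w : 'rV[R]_d) (c : R).

Lemma dotvC u v : dotv u v = dotv v u.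
Proof. by apply: eq_bigr => i _; rewrite mulrC. Qed.

Lemma dotvZl c u v : dotv (c *: u) v = c * dotv u v.
Proof. by rewrite /dotv mulr_sumr; apply: eq_bigr => i _; rewrite mxE mulrA. Qed.

Lemma dotvZr c u v : dotv u (c *: v) = c * dotv u v.
Proof. by rewrite dotvC dotvZl dotvC. Qed.

Lemma dotvBl u v w : dotv (u - v) w = dotv u w - dotv v w.
Proof. by rewrite /dotv -sumrB; apply: eq_bigr => i _; rewrite !mxE mulrBl. Qed.

Lemma dotv0l v : dotv 0 v = 0.
Proof. by rewrite /dotv big1 // => i _; rewrite mxE mul0r. Qed.

Lemma sqnorm_ge0 v : 0 <= sqnorm v.
Proof. by apply: sumr_ge0 => i _; rewrite -expr2 sqr_ge0. Qed.

Lemma sqnorm_eq0 v : (sqnorm v == 0) = (v == 0).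
Proof.
apply/eqP/eqP => [|->]; last exact: dotv0l.
rewrite /sqnorm /dotv => v0.
have sq_ge0 i : 0 <= v ord0 i * v ord0 i by rewrite -expr2 sqr_ge0.
apply/rowP => i; rewrite mxE; apply/eqP.
have /eqP := psumr_eq0P (fun j _ => sq_ge0 j) v0 (i := i) isT.
by rewrite mulf_eq0 orbb.
Qed.

Lemma sqnormZ c v : sqnorm (c *: v) = c ^+ 2 * sqnorm v.
Proof. by rewrite /sqnorm dotvZl dotvZr mulrA -expr2. Qed.

Lemma sqnormB u v : sqnorm (u - v) = sqnorm u - 2 * dotv u v + sqnorm v.
Proof.
rewrite /sqnorm /dotv mulr_sumr -sumrB -big_split /=.
by apply: eq_bigr => i _; rewrite !mxE; ring.
Qed.

Lemma sqr_enorm v : enorm v ^+ 2 = sqnorm v.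
Proof. by rewrite /enorm sqr_sqrtr // sqnorm_ge0. Qed.

Lemma enorm_ge0 v : 0 <= enorm v.
Proof. exact: sqrtr_ge0. Qed.

Lemma enorm_gt0 v : (0 < enorm v) = (v != 0).
Proof. by rewrite /enorm sqrtr_gt0 lt_def sqnorm_eq0 sqnorm_ge0 andbT. Qed.

Lemma enormZ c v : enorm (c *: v) = `|c| * enorm v.
Proof. by rewrite /enorm sqnormZ sqrtrM ?sqr_ge0 // sqrtr_sqr. Qed.

Lemma dotv_le_enorm u v : dotv u v <= enorm u * enorm v.
Proof.
have [->|u0] := eqVneq u 0; first by rewrite dotv0l mulr_ge0 ?enorm_ge0.
have [->|v0] := eqVneq v 0; first by rewrite dotvC dotv0l mulr_ge0 ?enorm_ge0.
have a_gt0 : 0 < enorm u by rewrite enorm_gt0.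
have b_gt0 : 0 < enorm v by rewrite enorm_gt0.
have := sqnorm_ge0 ((enorm u)^-1 *: u - (enorm v)^-1 *: v).
rewrite sqnormB !sqnormZ dotvZl dotvZr -!sqr_enorm !exprVn !mulVf ?expf_neq0 ?gt_eqF //.
set D := dotv u v => h.
have -> : D = enorm u * enorm v * ((enorm u)^-1 * ((enorm v)^-1 * D)).
  by field; rewrite !gt_eqF.
by apply: ler_piMr; [rewrite mulr_ge0 ?enorm_ge0 | lra].
Qed.

End EuclideanRowVectors.

Section SmoothFunctions.
Context {R : realType} {d : nat} {f : 'rV[R]_d -> R} {gradf : 'rV[R]_d -> 'rV[R]_d}.
Hypothesis f_grad : is_gradient f gradf.
Implicit Types (x v : 'rV[R]_d) (t : R).

Lemma is_derive_along x v t :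
  is_derive t 1 (fun s : R => f (s *: v + x)) (dotv (gradf (t *: v + x)) v).
Proof.
have line_diff : is_diff t (fun s : R => s *: v + x) (fun s => s *: v + 0).
  exact: (@is_diffD _ _ _ (fun s : R => s *: v) (cst x)).
have f_diff := (f_grad (t *: v + x)).1.
have comp_diff : differentiable (f \o (fun s : R => s *: v + x)) t.
  exact: differentiable_comp.
apply: DeriveDef; first exact/derivable1_diffP.
rewrite deriveE //= diff_comp //.
by rewrite /= diff_val scale1r addr0 (f_grad _).2.
Qed.

Context {beta : R}.
Hypothesis f_smooth : smooth beta gradf.

Lemma smooth_descent (x v : 'rV[R]_d) :
  f (v + x) <= f x + dotv (gradf x) v + beta / 2 * sqnorm v.
Proof.
set D := dotv (gradf x) v; set S := sqnorm v.
pose psi : R -> R := (fun s => f (s *: v + x)) - (fun s => s) * cst D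
  - cst (beta / 2 * S) * ((fun s => s) * (fun s => s)).
have psi_derive (t : R) : is_derive t 1 psi (dotv (gradf (t *: v + x)) v - D - beta * S * t).
  have along := is_derive_along x v t.
  by apply: is_derive_eq; rewrite /cst /= !scaler0 !addr0 add0r /GRing.scale /=; field.
have psi_dec : psi 1 <= psi 0.
  apply: (ler0_derive1_le_cc (a := 0) (b := 1)); rewrite ?in_itv /= ?ler01 ?lexx //.
  - move=> t; rewrite in_itv /= => /andP[t_gt0 _].
    rewrite derive1E derive_val subr_le0 -dotvBl.
    have := f_smooth (t *: v + x) x; rewrite addrK enormZ gtr0_norm // => sm.
    have -> : beta * S * t = beta * (t * enorm v) * enorm v by rewrite /S -sqr_enorm; ring.
    exact: le_trans (dotv_le_enorm _ _) (ler_wpM2r (enorm_ge0 v) sm).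
  - by apply: derivable_within_continuous => t _; exact: (psi_derive t).(ex_derive).
have psiE s : psi s = f (s *: v + x) - s * D - beta / 2 * S * (s * s) by [].
by move: psi_dec; rewrite !psiE scale1r scale0r add0r; lra.
Qed.

Lemma sqnorm_grad_le fstar x : (forall y, fstar <= f y) -> 0 <= beta ->
  sqnorm (gradf x) <= 2 * beta * (f x - fstar).
Proof.
move=> fstar_le beta_ge0; set N2 := sqnorm (gradf x).
have descent_step c : c * N2 - beta / 2 * c ^+ 2 * N2 <= f x - fstar.
  have := smooth_descent x ((- c) *: gradf x).
  rewrite dotvZr sqnormZ sqrrN -/N2; change (dotv (gradf x) (gradf x)) with N2.
  by have := fstar_le ((- c) *: gradf x + x); lra.
move: beta_ge0; rewrite le_eqVlt => /predU1P[beta0|beta_gt0].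
  rewrite -{}beta0 in descent_step *; rewrite mulr0 mul0r leNgt; apply/negP => N2_gt0.
  have := descent_step ((f x - fstar + 1) / N2).
  by rewrite !mul0r subr0 divfK ?gt_eqF //; lra.
have := descent_step beta^-1.
have -> : beta^-1 * N2 - beta / 2 * beta^-1 ^+ 2 * N2 = N2 / (2 * beta).
  by field; rewrite gt_eqF.
by rewrite ler_pdivrMr ?mulr_gt0 // => ?; lra.
Qed.

Lemma smooth_lt0_eq0 : beta < 0 -> forall v : 'rV[R]_d, v = 0.
Proof.
move=> beta_lt0 v; apply/eqP/negPn; rewrite -enorm_gt0 -leNgt.
have := f_smooth v 0; rewrite subr0.
by have := enorm_ge0 (gradf v - gradf 0); have := enorm_ge0 v; nra.
Qed.

End SmoothFunctions.

Section RealClosedBounds.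
Context {R : rcfType}.
Implicit Types (a b c x y beta D : R).

Lemma sqr_le_sqrt x y : x ^+ 2 <= y -> x <= Num.sqrt y.
Proof.
move=> xy; have y_ge0 := le_trans (sqr_ge0 x) xy.
by rewrite (le_trans (ler_norm x)) // -sqrtr_sqr ler_sqrt.
Qed.

Lemma dist_sqrtDsqr_le c a b : 0 <= c -> 0 <= a -> 0 <= b ->
  `|Num.sqrt (c + a ^+ 2) - Num.sqrt (c + b ^+ 2)| <= `|a - b|.
Proof.
move=> c0 a0 b0; set G := Num.sqrt _; set T := Num.sqrt _.
have G2 : G ^+ 2 = c + a ^+ 2 by rewrite sqr_sqrtr // addr_ge0 ?sqr_ge0.
have T2 : T ^+ 2 = c + b ^+ 2 by rewrite sqr_sqrtr // addr_ge0 ?sqr_ge0.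
have aG : a <= G by apply: sqr_le_sqrt; rewrite lerDr.
have bT : b <= T by apply: sqr_le_sqrt; rewrite lerDr.
have [GT_le0|GT_gt0] := lerP (G + T) 0.
  have [-> ->] : G = 0 /\ T = 0.
    by have := sqrtr_ge0 (c + a ^+ 2); have := sqrtr_ge0 (c + b ^+ 2); lra.
  by rewrite subrr normr0.
have eq_prod : `|G - T| * (G + T) = `|a - b| * (a + b).
  rewrite -(ger0_norm (ltW GT_gt0)) -(ger0_norm (addr_ge0 a0 b0)) -!normrM.
  have -> : (G - T) * (G + T) = G ^+ 2 - T ^+ 2 by ring.
  by rewrite G2 T2; congr `|_|; ring.
by rewrite -(ler_pM2r GT_gt0) eq_prod ler_wpM2l //; lra.
Qed.

Lemma mulr_sqrt_le_AGM beta D x : 0 <= beta -> 0 <= D -> 0 <= x ->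
  2 * x * Num.sqrt (2 * beta * D) <= D / 4 + 8 * beta * x ^+ 2.
Proof.
move=> beta_ge0 D_ge0 x_ge0.
have bx_ge0 : 0 <= beta * x ^+ 2 by rewrite mulr_ge0 ?sqr_ge0.
rewrite -(ler_pXn2r (n := 2)) ?nnegrE ?mulr_ge0 ?sqrtr_ge0 //; last by lra.
rewrite exprMn sqr_sqrtr ?mulr_ge0 //.
have -> : (D / 4 + 8 * beta * x ^+ 2) ^+ 2
  = (D / 4 - 8 * beta * x ^+ 2) ^+ 2 + (2 * x) ^+ 2 * (2 * beta * D) by field.
by rewrite lerDr sqr_ge0.
Qed.

End RealClosedBounds.

Section StepsizeGap.
Context {R : realFieldType}.

Lemma stepsize_gap_mul_le (eta G T N a s0 s1 : R) :
  0 < eta -> 0 < G -> 0 < T -> 0 <= N -> 0 <= a -> 0 <= s0 -> 0 <= s1 ->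
  s0 <= T -> s1 * N <= T -> `|G - T| ^+ 2 <= 2 * (s0 ^+ 2 + s1 ^+ 2 * N ^+ 2) ->
  `|eta / T - eta / G| * (N * a)
  <= eta / T * N ^+ 2 / 4 + 2 * eta * s0 * (a ^+ 2 / G ^+ 2)
     + 2 * eta * s1 * N * (a ^+ 2 / G ^+ 2).
Proof.
move=> eta_gt0 G_gt0 T_gt0 N_ge0 a_ge0 s0_ge0 s1_ge0 s0_le_T s1N_le_T gap.
have key : `|G - T| * N * a * G
    <= N ^+ 2 * G ^+ 2 / 4 + 2 * s0 * a ^+ 2 * T + 2 * s1 * N * a ^+ 2 * T.
  have amgm : `|G - T| * a * (N * G) <= (N * G) ^+ 2 / 4 + `|G - T| ^+ 2 * a ^+ 2.
    by have := sqr_ge0 (N * G / 2 - `|G - T| * a); nra.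
  have gap_a : `|G - T| ^+ 2 * a ^+ 2 <= 2 * (s0 ^+ 2 + s1 ^+ 2 * N ^+ 2) * a ^+ 2.
    by rewrite ler_wpM2r ?sqr_ge0.
  have noise_T : (s0 ^+ 2 + s1 ^+ 2 * N ^+ 2) * a ^+ 2 <= (s0 + s1 * N) * T * a ^+ 2.
    rewrite ler_wpM2r ?sqr_ge0 //.
    have := ler_wpM2l s0_ge0 s0_le_T; have := ler_wpM2l (mulr_ge0 s1_ge0 N_ge0) s1N_le_T.
    lra.
  lra.
have -> : `|eta / T - eta / G| * (N * a)
    = eta / (G ^+ 2 * T) * (`|G - T| * N * a * G).
  have -> : eta / T - eta / G = eta * (G - T) / (G * T) by field; rewrite !gt_eqF.
  rewrite normrM normfV (gtr0_norm (mulr_gt0 G_gt0 T_gt0)) normrM (gtr0_norm eta_gt0).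
  by field; rewrite !gt_eqF.
have -> : eta / T * N ^+ 2 / 4 + 2 * eta * s0 * (a ^+ 2 / G ^+ 2)
      + 2 * eta * s1 * N * (a ^+ 2 / G ^+ 2)
    = eta / (G ^+ 2 * T)
      * (N ^+ 2 * G ^+ 2 / 4 + 2 * s0 * a ^+ 2 * T + 2 * s1 * N * a ^+ 2 * T).
  by field; rewrite !gt_eqF.
by rewrite ler_wpM2l // divr_ge0 ?mulr_ge0 ?sqr_ge0 ?ltW.
Qed.

End StepsizeGap.

Section DecorrelatedStep.
Context {R : realType} {d : nat}.
Implicit Types u g : 'rV[R]_d.

Lemma noisy_enorm_gap u g (s0 s1 : R) :
  sqnorm (g - u) <= s0 ^+ 2 + s1 ^+ 2 * sqnorm u ->
  (enorm g - Num.sqrt ((1 + s1 ^+ 2) * sqnorm u + s0 ^+ 2)) ^+ 2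
    <= 2 * (s0 ^+ 2 + s1 ^+ 2 * sqnorm u).
Proof.
move=> noise; set b := Num.sqrt _.
have s1u_ge0 : 0 <= s1 ^+ 2 * sqnorm u by rewrite mulr_ge0 ?sqr_ge0 ?sqnorm_ge0.
have b2 : b ^+ 2 = (1 + s1 ^+ 2) * sqnorm u + s0 ^+ 2.
  by rewrite sqr_sqrtr //; have := sqnorm_ge0 u; have := sqr_ge0 s0; lra.
have u_le_b : enorm u <= b.
  by apply: sqr_le_sqrt; rewrite sqr_enorm; have := sqr_ge0 s0; lra.
have dot_le : dotv g u <= enorm g * b.
  by apply: le_trans (dotv_le_enorm g u) _; rewrite ler_wpM2l ?enorm_ge0.
move: noise; rewrite sqnormB -sqr_enorm.
have -> : (enorm g - b) ^+ 2 = enorm g ^+ 2 - 2 * (enorm g * b) + b ^+ 2 by ring.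
by rewrite b2; lra.
Qed.

Lemma stepsize_gap_dotv_le (eta c s0 s1 : R) u g :
  0 < eta -> 0 < c -> 0 <= s0 -> 0 <= s1 ->
  sqnorm (g - u) <= s0 ^+ 2 + s1 ^+ 2 * sqnorm u ->
  `|eta / Num.sqrt (c ^+ 2 + (1 + s1 ^+ 2) * sqnorm u + s0 ^+ 2)
    - eta / Num.sqrt (c ^+ 2 + sqnorm g)| * dotv u g
  <= eta / Num.sqrt (c ^+ 2 + (1 + s1 ^+ 2) * sqnorm u + s0 ^+ 2) * sqnorm u / 4
     + 2 * eta * s0 * (sqnorm g / Num.sqrt (c ^+ 2 + sqnorm g) ^+ 2)
     + 2 * eta * s1 * enorm u * (sqnorm g / Num.sqrt (c ^+ 2 + sqnorm g) ^+ 2).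
Proof.
move=> eta_gt0 c_gt0 s0_ge0 s1_ge0 noise.
move/noisy_enorm_gap: (noise) => gap.
set b := Num.sqrt _ in gap.
have b2 : b ^+ 2 = (1 + s1 ^+ 2) * sqnorm u + s0 ^+ 2.
  by rewrite sqr_sqrtr // addr_ge0 ?sqr_ge0 // mulr_ge0 ?sqnorm_ge0 // addr_ge0 ?sqr_ge0.
rewrite -!sqr_enorm in gap b2 *; rewrite -[c ^+ 2 + _ + s0 ^+ 2]addrA -b2.
set N := enorm u in gap b2 *; set a := enorm g in gap *.
set T := Num.sqrt (_ + b ^+ 2); set G := Num.sqrt (_ + a ^+ 2).
have c2_gt0 : 0 < c ^+ 2 by rewrite exprn_gt0.
have s1N_ge0 : 0 <= s1 ^+ 2 * N ^+ 2 by rewrite mulr_ge0 ?sqr_ge0.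
have s0_le_T : s0 <= T.
  by apply: sqr_le_sqrt; rewrite b2; have := sqr_ge0 N; lra.
have s1N_le_T : s1 * N <= T.
  by apply: sqr_le_sqrt; rewrite b2 exprMn; have := sqr_ge0 N; have := sqr_ge0 s0; lra.
have dist_sqr_le : `|G - T| ^+ 2 <= 2 * (s0 ^+ 2 + s1 ^+ 2 * N ^+ 2).
  apply: le_trans gap.
  rewrite -(real_normK (num_real (_ - b))) ler_pXn2r ?nnegrE ?normr_ge0 //.
  by apply: dist_sqrtDsqr_le; rewrite ?sqr_ge0 ?enorm_ge0 ?sqrtr_ge0.
apply: le_trans (ler_wpM2l (normr_ge0 _) (dotv_le_enorm u g)) _.
by apply: stepsize_gap_mul_le; rewrite ?enorm_ge0 ?sqrtr_gt0 ?ltr_pwDl ?sqr_ge0.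
Qed.

End DecorrelatedStep.

Section AdaGradAccumulator.
Context {R : realType} {d : nat} (gamma : R) (g : nat -> 'rV[R]_d).

Lemma Gacc_gt0 s : 0 < gamma -> 0 < Gacc gamma g s.
Proof.
move=> gamma_gt0; rewrite sqrtr_gt0 ltr_pwDl ?exprn_gt0 //.
by apply: sumr_ge0 => i _; exact: sqnorm_ge0.
Qed.

Lemma GaccS s : Gacc gamma g s.+1 = Num.sqrt (Gacc gamma g s ^+ 2 + sqnorm (g s.+1)).
Proof.
rewrite {1}/Gacc big_nat_recr //= addrA /Gacc sqr_sqrtr // addr_ge0 ?sqr_ge0 //.
by apply: sumr_ge0 => i _; exact: sqnorm_ge0.
Qed.

End AdaGradAccumulator.

Section MaxSuboptimality.
Context {R : realType} {d : nat} {f : 'rV[R]_d -> R} {fstar : R} {w : nat -> 'rV[R]_d}.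

Lemma Delta_bar_ge s t : (1 <= s <= t)%N -> f (w s) - fstar <= Delta_bar f fstar w t.
Proof. by move=> s_in; rewrite lerD2r le_bigmax_seq // mem_index_iota ltnS. Qed.

Lemma Delta_bar_ge0 t : (forall x, fstar <= f x) -> 0 <= Delta_bar f fstar w t.
Proof. by move=> fstar_le; rewrite subr_ge0 (le_trans (fstar_le (w 1%N))) ?bigmax_ge_id. Qed.

End MaxSuboptimality.

Section AdaSGD.
Context {R : realType} {d : nat} {f : 'rV[R]_d -> R} {gradf : 'rV[R]_d -> 'rV[R]_d}.
Context {beta fstar eta gamma sigma0 sigma1 : R} {w g : nat -> 'rV[R]_d}.
Hypotheses (f_grad : is_gradient f gradf) (f_smooth : smooth beta gradf).
Hypothesis fstar_le : forall x, fstar <= f x.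
Hypotheses (eta_gt0 : 0 < eta) (gamma_gt0 : 0 < gamma).
Hypotheses (sigma0_ge0 : 0 <= sigma0) (sigma1_ge0 : 0 <= sigma1).
Hypothesis noise : forall t, (1 <= t)%N ->
  sqnorm (g t - gradf (w t)) <= sigma0 ^+ 2 + sigma1 ^+ 2 * sqnorm (gradf (w t)).

Local Notation eta_ada_t := (eta_ada eta gamma g).
Local Notation eta_dec_t := (eta_dec eta gamma sigma0 sigma1 gradf w g).
Local Notation ratio s := (sqnorm (g s) / Gacc gamma g s ^+ 2).

Lemma stepsize_gap_le s : (1 <= s)%N ->
  `|eta_dec_t s - eta_ada_t s| * dotv (gradf (w s)) (g s)
  <= eta_dec_t s * sqnorm (gradf (w s)) / 4 + 2 * eta * sigma0 * ratio s
     + 2 * eta * sigma1 * enorm (gradf (w s)) * ratio s.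
Proof.
case: s => // s _; rewrite /eta_dec /eta_ada GaccS /=.
by apply: stepsize_gap_dotv_le; rewrite ?Gacc_gt0 ?noise.
Qed.

Lemma sum_stepsize_gap_le t :
  \sum_(1 <= s < t.+1) `|eta_dec_t s - eta_ada_t s| * dotv (gradf (w s)) (g s)
  <= (\sum_(1 <= s < t.+1) eta_dec_t s * sqnorm (gradf (w s))) / 4
     + 2 * eta * sigma0 * \sum_(1 <= s < t.+1) ratio s
     + \sum_(1 <= s < t.+1) 2 * eta * sigma1 * enorm (gradf (w s)) * ratio s.
Proof.
rewrite mulr_suml mulr_sumr -!big_split /=.
by apply: ler_sum_nat => s /andP[s_ge1 _]; exact: stepsize_gap_le.
Qed.

Lemma enorm_grad_le_sqrt_Delta s t : 0 <= beta -> (1 <= s <= t)%N ->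
  enorm (gradf (w s)) <= Num.sqrt (2 * beta * Delta_bar f fstar w t).
Proof.
move=> beta_ge0 s_in; apply: sqr_le_sqrt; rewrite sqr_enorm.
apply: le_trans (sqnorm_grad_le f_grad f_smooth _ (w s) fstar_le beta_ge0) _.
by rewrite ler_wpM2l ?mulr_ge0 // Delta_bar_ge.
Qed.

Lemma sum_relative_noise_term_le t :
  \sum_(1 <= s < t.+1) 2 * eta * sigma1 * enorm (gradf (w s)) * ratio s
  <= Delta_bar f fstar w t / 4
     + 8 * eta ^+ 2 * beta * sigma1 ^+ 2 * (\sum_(1 <= s < t.+1) ratio s) ^+ 2.
Proof.
have Delta_ge0 : 0 <= Delta_bar f fstar w t := Delta_bar_ge0 t fstar_le.
have [beta_lt0|beta_ge0] := ltP beta 0.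
  have sqnorm0 (v : 'rV[R]_d) : sqnorm v = 0.
    by rewrite (smooth_lt0_eq0 f_smooth beta_lt0 v) /sqnorm dotv0l.
  rewrite big1 => [|s _]; last by rewrite /enorm sqnorm0 sqrtr0 mulr0 mul0r.
  rewrite big1 => [|s _]; last by rewrite sqnorm0 mul0r.
  by rewrite expr0n mulr0 addr0 divr_ge0.
pose K := Num.sqrt (2 * beta * Delta_bar f fstar w t).
apply: (le_trans (y := \sum_(1 <= s < t.+1) 2 * eta * sigma1 * K * ratio s)).
  apply: ler_sum_nat => s s_in; rewrite ler_wpM2r ?divr_ge0 ?sqnorm_ge0 ?sqr_ge0 //.
  by rewrite ler_wpM2l ?enorm_grad_le_sqrt_Delta // mulr_ge0 // mulr_ge0 // ltW.
rewrite -mulr_sumr; set S := \sum_(1 <= s < t.+1) ratio s.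
have S_ge0 : 0 <= S by apply: sumr_ge0 => s _; rewrite divr_ge0 ?sqnorm_ge0 ?sqr_ge0.
have x_ge0 : 0 <= eta * sigma1 * S by rewrite !mulr_ge0 // ltW.
have := mulr_sqrt_le_AGM _ _ _ beta_ge0 Delta_ge0 x_ge0.
rewrite -/K; lra.
Qed.

End AdaSGD.

Theorem lemma7 (R : realType) (d : nat) (f : 'rV[R]_d -> R)
  (gradf : 'rV[R]_d -> 'rV[R]_d) (beta fstar eta gamma sigma0 sigma1 : R)
  (w g : nat -> 'rV[R]_d) :
  is_gradient f gradf ->
  smooth beta gradf ->
  (forall x, fstar <= f x) -> (exists x, f x = fstar) ->
  0 < eta -> 0 < gamma -> 0 <= sigma0 -> 0 <= sigma1 ->
  (* AdaSGD update, for t >= 1 (w 1 arbitrary) *)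
  (forall t, (1 <= t)%N -> w t.+1 = w t - eta_ada eta gamma g t *: g t) ->
  (* bounded affine noise, holding surely along the trajectory *)
  (forall t, (1 <= t)%N ->
     sqnorm (g t - gradf (w t)) <= sigma0 ^+ 2 + sigma1 ^+ 2 * sqnorm (gradf (w t))) ->
  forall t, (1 <= t)%N ->
    \sum_(1 <= s < t.+1)
        `|eta_dec eta gamma sigma0 sigma1 gradf w g s - eta_ada eta gamma g s|
          * dotv (gradf (w s)) (g s)
    <= Delta_bar f fstar w t / 4
       + 2^-1 * \sum_(1 <= s < t.+1)
                  eta_dec eta gamma sigma0 sigma1 gradf w g s * sqnorm (gradf (w s))
       + 2 * eta * sigma0 * \sum_(1 <= s < t.+1) sqnorm (g s) / Gacc gamma g s ^+ 2
       + 8 * eta ^+ 2 * beta * sigma1 ^+ 2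
           * (\sum_(1 <= s < t.+1) sqnorm (g s) / Gacc gamma g s ^+ 2) ^+ 2.
Proof.
move=> f_grad f_smooth fstar_le _ eta_gt0 gamma_gt0 sigma0_ge0 sigma1_ge0 _ noise t _.
have := sum_stepsize_gap_le eta_gt0 gamma_gt0 sigma0_ge0 sigma1_ge0 noise t.
have := sum_relative_noise_term_le (gamma := gamma) (w := w) (g := g)
  f_grad f_smooth fstar_le eta_gt0 sigma1_ge0 t.
have decorrelated_ge0 : 0 <= \sum_(1 <= s < t.+1)
    eta_dec eta gamma sigma0 sigma1 gradf w g s * sqnorm (gradf (w s)).
  by apply: sumr_ge0 => s _; rewrite mulr_ge0 ?sqnorm_ge0 ?divr_ge0 ?sqrtr_ge0 ?ltW.
lra.
Qed.
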